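(* Let $V'$ be a finite set of nodes, $k\ge 1$ an integer (number of clusters, labelled $1,\dots,k$), and $E'^{\mathrm{CL}}$ a set of unordered pairs $\{i,j\}$ of distinct nodes of $V'$ (hard cannot-link constraints). Let $H=(V',E'^{\mathrm{CL}})$ and $\Delta(H)=\max_{i\in V'}\deg_H(i)$. Suppose a feasible assignment exists, i.e. there is a map $c:V'\to\{1,\dots,k\}$ with $c(i)\neq c(j)$ for all $\{i,j\}\in E'^{\mathrm{CL}}$. Let $q$ be an integer with $q\ge \min(1+\Delta(H),k)$ (and $q\le k$), and for every $i\in V'$ let $L_i\subseteq\{1,\dots,k\}$ contain the $q$ clusters whose centers are nearest to node $i$ (possibly together with additional clusters). Then the model (R($q$)MBLP) described in the context has a feasible solution, and hence solving it yields an assignment of every node to a cluster that satisfies all hard cannot-link constraints.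
   Context: Setting: nodes $i\in V'$ have feature vectors and positive integer weights $s_i$; there are $k$ cluster centers, and $d_{il}\ge 0$ denotes the squared Euclidean distance between node $i$ and the center of cluster $l$. Besides the hard cannot-link pairs $E'^{\mathrm{CL}}$, there are sets $E'^{\mathrm{SCL}}$ and $E'^{\mathrm{SML}}$ of pairs (soft cannot-link and soft must-link constraints) with weights $w'_{ij}>0$, and a penalty $P>0$. Given the sets $L_i$, define $E''^{\mathrm{CL}}=\{\{i,j\}\in E'^{\mathrm{CL}}: L_i\cap L_j\neq\emptyset\}$, $E''^{\mathrm{SCL}}=\{\{i,j\}\in E'^{\mathrm{SCL}}: L_i\cap L_j\neq\emptyset\}$, and let $E''^{\mathrm{SML}}\subseteq E'^{\mathrm{SML}}$. The model (R($q$)MBLP) is: minimize $\sum_{i\in V'}\sum_{l\in L_i}s_i d_{il}x_{il}+P\big(\sum_{\{i,j\}\in E''^{\mathrm{SCL}}}w'_{ij}y_{ij}+\sum_{\{i,j\}\in E''^{\mathrm{SML}}}w'_{ij}z_{ij}\big)$ subject to $\sum_{l\in L_i}x_{il}=1$ for all $i\in V'$; $x_{il}+x_{jl}\le 1$ for all $\{i,j\}\in E''^{\mathrm{CL}}$, $l\in L_i\cap L_j$; $x_{il}+x_{jl}\le 1+y_{ij}$ for all $\{i,j\}\in E''^{\mathrm{SCL}}$, $l\in L_i\cap L_j$; $x_{il}-x_{jl}\le z_{ij}$ for all $\{i,j\}\in E''^{\mathrm{SML}}$, $l\in L_i\cap L_j$; $x_{il}\le z_{ij}$ for $\{i,j\}\in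 E''^{\mathrm{SML}}$, $l\in L_i\setminus L_j$; $x_{jl}\le z_{ij}$ for $\{i,j\}\in E''^{\mathrm{SML}}$, $l\in L_j\setminus L_i$; $x_{il}\in\{0,1\}$ for $i\in V'$, $l\in L_i$; $y_{ij}\ge 0$, $z_{ij}\ge 0$. A solution assigns node $i$ to the unique cluster $l\in L_i$ with $x_{il}=1$. *)

From mathcomp Require Import all_boot all_order all_algebra.
Set Implicit Arguments. Unset Strict Implicit. Unset Printing Implicit Defensive.
Import Order.TTheory GRing.Theory Num.Theory.
Local Open Scope ring_scope.

(* A set of unordered pairs of distinct nodes is represented by a set of
   ordered pairs containing exactly one orientation of each unordered pair. *)
Definition unordered_pairs (V : finType) (E : {set V * V}) : Prop :=
  forall i j, (i, j) \in E -> (i != j) /\ ((j, i) \notin E).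

Definition deg (V : finType) (E : {set V * V}) (i : V) : nat :=
  #|[set j | ((i, j) \in E) || ((j, i) \in E)]|.

Definition maxdeg (V : finType) (E : {set V * V}) : nat :=
  (\max_(i : V) deg E i)%N.

Definition restrict_pairs (V : finType) (k : nat) (L : V -> {set 'I_k})
  (E : {set V * V}) : {set V * V} :=
  [set p in E | L p.1 :&: L p.2 != set0].

(* Feasibility of (R(q)MBLP) for binary x and real y, z. The objective
   (weights s_i, distances d, w', P) does not affect feasibility. *)
Definition RMBLP_feasible (R : realFieldType) (V : finType) (k : nat)
  (L : V -> {set 'I_k}) (CL SCL SML2 : {set V * V})
  (x : V -> 'I_k -> bool) (y z : V -> V -> R) : Prop :=
  [/\ (forall i, \sum_(l in L i) ((x i l)%:R : R) = 1),
      (forall i j, (i, j) \in restrict_pairs L CL ->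
         forall l, l \in L i :&: L j -> ((x i l)%:R + (x j l)%:R : R) <= 1),
      (forall i j, (i, j) \in restrict_pairs L SCL ->
         forall l, l \in L i :&: L j -> ((x i l)%:R + (x j l)%:R : R) <= 1 + y i j),
      (forall i j, (i, j) \in SML2 ->
         [/\ (forall l, l \in L i :&: L j -> ((x i l)%:R - (x j l)%:R : R) <= z i j),
             (forall l, l \in L i :\: L j -> ((x i l)%:R : R) <= z i j) &
             (forall l, l \in L j :\: L i -> ((x j l)%:R : R) <= z i j)]) &
      ((forall i j, (i, j) \in restrict_pairs L SCL -> 0 <= y i j) /\
       (forall i j, (i, j) \in SML2 -> 0 <= z i j))].

From mathcomp Require Import all_boot all_order all_algebra.
From mathcomp Require Import zify lra.
Import Order.TTheory GRing.Theory Num.Theory.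

Set Implicit Arguments.
Unset Strict Implicit.
Unset Printing Implicit Defensive.

(** A feasible x is exactly a proper list colouring of the cannot-link graph
    [H] from the lists [L i].  If [q >= k] every list is the whole palette and
    the assumed feasible assignment works; otherwise [|L i| >= q > Delta(H)
    >= deg i], and colouring the nodes greedily one by one always leaves a
    free colour in the list of the current node.  Conversely, the constraint
    [x i l + x j l <= 1] forbids any cannot-link pair to share a cluster. *)

Definition neighbours (V : finType) (E : {set V * V}) (i : V) : {set V} :=
  [set j | ((i, j) \in E) || ((j, i) \in E)].

Lemma deg_neighbours (V : finType) (E : {set V * V}) (i : V) :
  deg E i = #|neighbours E i|.
Proof. by []. Qed.

Lemma deg_le_maxdeg (V : finType) (E : {set V * V}) (i : V) :
  deg E i <= maxdeg E.
Proof. exact: leq_bigmax. Qed.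

Lemma exists_notin_imset (T C : finType) (f : T -> C) (A : {set T})
    (B : {set C}) :
  #|A| < #|B| -> exists2 l, l \in B & l \notin f @: A.
Proof.
move=> ltAB; have : 0 < #|B :\: f @: A|.
  rewrite cardsD; have := leq_imset_card f A.
  have := subset_leq_card (subsetIr B (f @: A)); lia.
by rewrite card_gt0 => /set0Pn [l]; rewrite inE => /andP [lfA lB]; exists l.
Qed.

Lemma cards_ordT k (A : {set 'I_k}) : k <= #|A| -> A = [set: 'I_k].
Proof.
by move=> kA; apply/eqP; rewrite eqEcard subsetT cardsT card_ord.
Qed.

Section ListColouring.

Variables (V C : finType) (E : {set V * V}) (L : V -> {set C}).

Hypothesis E_irrefl : forall i j, (i, j) \in E -> i != j.
Hypothesis deg_lt_list : forall i, deg E i < #|L i|.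

Lemma list_colouring_on (S : {set V}) :
  exists c : V -> C, (forall i, c i \in L i) /\
    (forall i j, (i, j) \in E -> i \in S -> j \in S -> c i != c j).
Proof.
elim: {S}#|S| {-2}S (leqnn #|S|) => [|n IHn] S leSn.
  have L_neq0 i : exists l, l \in L i.
    by apply/set0Pn; rewrite -card_gt0; apply: leq_ltn_trans (deg_lt_list i).
  exists (fun i => xchoose (L_neq0 i)); split=> [i|i j _ iS].
    exact: xchooseP.
  by move: leSn iS; rewrite leqn0 cards_eq0 => /eqP ->; rewrite inE.
have [->|[v vS]] := set_0Vmem S; first by apply: IHn; rewrite cards0.
have [c [cL c_proper]] : exists c : V -> C, (forall i, c i \in L i) /\
    (forall i j, (i, j) \in E -> i \in S :\ v -> j \in S :\ v -> c i != c j).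
  by apply: IHn; move: leSn; rewrite (cardsD1 v S) vS.
have [l lL l_free] : exists2 l, l \in L v & l \notin c @: neighbours E v.
  by apply: exists_notin_imset; rewrite -deg_neighbours.
have l_neq u : u \in neighbours E v -> c u != l.
  by move=> uv; apply: contraNneq l_free => <-; apply: imset_f.
exists (fun u => if u == v then l else c u); split=> [i|i j ij iS jS].
  by case: eqP => [->|].
have ij_neq := E_irrefl ij.
case: (eqVneq i v) => [iv|iv]; case: (eqVneq j v) => [jv|jv].
- by rewrite iv jv eqxx in ij_neq.
- by subst i; rewrite eq_sym; apply: l_neq; rewrite inE ij.
- by subst j; apply: l_neq; rewrite inE ij orbT.
- by apply: c_proper; rewrite // !inE ?iv ?jv.
Qed.

Lemma list_colouring :
  exists c : V -> C, (forall i, c i \in L i) /\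
    (forall i j, (i, j) \in E -> c i != c j).
Proof.
have [c [cL c_proper]] := list_colouring_on [set: V].
by exists c; split=> // i j ij; apply: c_proper; rewrite ?inE.
Qed.

End ListColouring.

Lemma list_colouring_of_long_lists (V : finType) (k q : nat)
    (E : {set V * V}) (L : V -> {set 'I_k}) :
  unordered_pairs E ->
  (exists c : V -> 'I_k, forall i j, (i, j) \in E -> c i != c j) ->
  minn (maxdeg E).+1 k <= q -> (forall i, q <= #|L i|) ->
  exists c : V -> 'I_k, (forall i, c i \in L i) /\
    (forall i j, (i, j) \in E -> c i != c j).
Proof.
move=> E_pairs [c0 c0_proper] q_ge L_ge.
have E_irrefl i j : (i, j) \in E -> i != j by case/E_pairs.
case: (leqP k (maxdeg E).+1) => [k_le|Delta_lt].
  have LT i : L i = [set: 'I_k].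
    by apply: cards_ordT; apply: leq_trans (L_ge i); move: q_ge; lia.
  by exists c0; split=> // i; rewrite LT inE.
move: q_ge; rewrite (minn_idPl (ltnW Delta_lt)) => q_ge.
apply: list_colouring => // i.
exact: leq_ltn_trans (deg_le_maxdeg E i) (leq_trans q_ge (L_ge i)).
Qed.

Local Open Scope ring_scope.

Definition assignment_of (V : finType) (k : nat) (c : V -> 'I_k) :
  V -> 'I_k -> bool :=
  fun i l => c i == l.

Lemma sum_assignment_of (R : nzSemiRingType) (V : finType) (k : nat)
    (c : V -> 'I_k) (A : {set 'I_k}) (i : V) :
  c i \in A -> \sum_(l in A) ((assignment_of c i l)%:R : R) = 1.
Proof.
move=> ciA; rewrite (bigD1 (c i)) //= /assignment_of eqxx big1 ?addr0 //.
by move=> l /andP [_ lci]; rewrite eq_sym (negbTE lci).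
Qed.

Lemma natr_bool_le1 (R : numDomainType) (b : bool) : (b%:R : R) <= 1.
Proof. by case: b. Qed.

Lemma RMBLP_feasible_assignment_of (R : realFieldType) (V : finType)
    (k : nat) (L : V -> {set 'I_k}) (CL SCL SML2 : {set V * V})
    (c : V -> 'I_k) :
  (forall i, c i \in L i) -> (forall i j, (i, j) \in CL -> c i != c j) ->
  RMBLP_feasible L CL SCL SML2 (assignment_of c)
    (fun _ _ => 1 : R) (fun _ _ => 1 : R).
Proof.
move=> cL c_proper.
have x_le1 i l : ((assignment_of c i l)%:R : R) <= 1 by apply: natr_bool_le1.
have x_ge0 i l : 0 <= ((assignment_of c i l)%:R : R) by apply: ler0n.
split=> [i|i j /setIdP [ij _] l _|i j _ l _|i j _|].
- exact: sum_assignment_of.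
- rewrite /assignment_of; case: eqP => [<-|_] /=.
    by rewrite eq_sym (negbTE (c_proper _ _ ij)) addr0.
  by rewrite add0r natr_bool_le1.
- by have := x_le1 i l; have := x_le1 j l; lra.
- split=> l _; [have := x_le1 i l; have := x_ge0 j l; lra | exact: x_le1 ..].
- by split=> *; apply: ler01.
Qed.

Lemma RMBLP_feasible_separates_CL (R : realFieldType) (V : finType)
    (k : nat) (L : V -> {set 'I_k}) (CL SCL SML2 : {set V * V})
    (x : V -> 'I_k -> bool) (y z : V -> V -> R) :
  RMBLP_feasible L CL SCL SML2 x y z ->
  forall i j, (i, j) \in CL ->
  forall l l', l \in L i -> x i l -> l' \in L j -> x j l' -> l != l'.
Proof.
move=> [_ CL_sep _ _ _] i j ij l l' li xil lj xjl'.
apply: contraTneq isT => ll'; subst l'.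
have ij_restr : (i, j) \in restrict_pairs L CL.
  by rewrite inE ij; apply/set0Pn; exists l; rewrite inE li.
have := CL_sep _ _ ij_restr l; rewrite inE li lj xil xjl' => /(_ isT) /=.
lra.
Qed.

Theorem lemma1 (R : realFieldType) (V : finType) (k : nat)
  (CL SCL SML SML2 : {set V * V}) (d : V -> 'I_k -> R)
  (L : V -> {set 'I_k}) (q : nat) :
  (0 < k)%N ->
  unordered_pairs CL -> unordered_pairs SCL -> unordered_pairs SML ->
  SML2 \subset SML ->
  (forall i l, 0 <= d i l) ->
  (exists c : V -> 'I_k, forall i j, (i, j) \in CL -> c i != c j) ->
  (minn (maxdeg CL).+1 k <= q)%N -> (q <= k)%N ->
  (forall i, exists N : {set 'I_k},
      [/\ N \subset L i, #|N| = q &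
          forall l l', l \in N -> l' \notin N -> d i l <= d i l']) ->
  (exists (x : V -> 'I_k -> bool) (y z : V -> V -> R),
      RMBLP_feasible L CL SCL SML2 x y z) /\
  (forall (x : V -> 'I_k -> bool) (y z : V -> V -> R),
      RMBLP_feasible L CL SCL SML2 x y z ->
      forall i j, (i, j) \in CL ->
      forall l l', l \in L i -> x i l -> l' \in L j -> x j l' -> l != l').
Proof.
move=> _ CL_pairs _ _ _ _ feasible q_ge _ nearest.
have L_ge i : (q <= #|L i|)%N.
  by have [N [NL <- _]] := nearest i; apply: subset_leq_card.
have [c [cL c_proper]] :=
  list_colouring_of_long_lists CL_pairs feasible q_ge L_ge.
split; last exact: RMBLP_feasible_separates_CL.
by exists (assignment_of c), (fun _ _ => 1), (fun _ _ => 1);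
  apply: RMBLP_feasible_assignment_of.
Qed.
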